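(* Let $N>1$ be an integer and $v=2^N$. For $1\le i\le N$ let $A_i\subseteq\mathbb{Z}_{2^N}$ be the set of residues $t\in\{0,\dots,2^N-1\}$ with $t \bmod 2^i\in\{0,1,\dots,2^{i-1}-1\}$ (i.e. the binary sequence of $A_i$ consists of a block of $2^{i-1}$ ones followed by $2^{i-1}$ zeros, repeated $2^{N-i}$ times). Then $\{A_1,\dots,A_N\}$ is a $(2^N,N,2^{N-1},2^{N-2})$-PSEDF in $\mathbb{Z}_{2^N}$. In particular, a $(2^N, N, 2^{N-1}, 2^{N-2})$-PSEDF exists in $\mathbb{Z}_{2^N}$.
   Context: Groups are written additively. For subsets $A,B$ of a group $G$, $\Delta(A,B)$ denotes the multiset $\{a-b: a\in A, b\in B\}$. For a group $G$ of order $v$ and $m>1$, a family of $k$-subsets $\{A_1,\dots,A_m\}$ of $G$ is a $(v,m,k,\lambda)$-PSEDF (pairwise strong external difference family) if for every pair $i\neq j$ the multiset $\Delta(A_i,A_j)$ contains every element of $G$ exactly $\lambda$ times (the sets need not be disjoint). *)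

From HB Require Import structures.
From mathcomp Require Import all_boot all_order all_algebra.
Set Implicit Arguments. Unset Strict Implicit. Unset Printing Implicit Defensive.
Import GRing.Theory.
Local Open Scope ring_scope.

(* Number of representations of g as a - b with a in A, b in B,
   i.e. the multiplicity of g in the multiset Delta(A,B). *)
Definition delta_mult (G : finZmodType) (A B : {set G}) (g : G) : nat :=
  #|[set p : G * G | [&& p.1 \in A, p.2 \in B & p.1 - p.2 == g]]|.

Definition PSEDF (G : finZmodType) (v m k lam : nat) (A : 'I_m -> {set G}) : Prop :=
  [/\ #|G| = v, (1 < m)%N,
      (forall i, #|A i| = k) &
      (forall i j : 'I_m, i != j -> forall g : G, delta_mult (A i) (A j) g = lam)].

Definition Aset (N i : nat) : {set 'Z_(2 ^ N)} :=
  [set t : 'Z_(2 ^ N) | (nat_of_ord t %% 2 ^ i < 2 ^ i.-1)%N].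

From mathcomp Require Import all_boot all_order all_algebra.
From mathcomp Require Import zify.
Set Implicit Arguments. Unset Strict Implicit. Unset Printing Implicit Defensive.
Import GRing.Theory.
Local Open Scope ring_scope.

(* If a translation s fixes X and maps Y onto its complement, then x |-> x + s
   is a bijection from X :&: Y onto X :\: Y, so #|X :&: Y| = #|X| / 2.  In
   Z_{2^N}, translation by 2^k complements A_(k+1) and fixes every A_i with
   i <= k.  For i < j the translate A_i - g is thus fixed by 2^(j-1) and
   complemented by 2^(i-1), while 2^(j-1) complements A_j; halving twice gives
   #|(A_i - g) :&: A_j| = 2^N / 4, which is the multiplicity of g in
   Delta(A_i, A_j). *)

Section TranslationCounting.
Variable G : finZmodType.
Implicit Types (A B X Y : {set G}) (s t g : G).

Definition periodic s A := forall x, (x + s \in A) = (x \in A).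
Definition antiperiodic s A := forall x, (x + s \in A) = (x \notin A).

Lemma periodic_translate s g A :
  periodic s A -> periodic s [set b | b + g \in A].
Proof. by move=> perA x; rewrite !inE addrAC perA. Qed.

Lemma antiperiodic_translate s g A :
  antiperiodic s A -> antiperiodic s [set b | b + g \in A].
Proof. by move=> antiA x; rewrite !inE addrAC antiA. Qed.

Lemma card_setI_antiperiodic s A B :
  periodic s A -> antiperiodic s B -> (#|A :&: B| * 2 = #|A|)%N.
Proof.
move=> perA antiB.
have shift_AIB : [set x + s | x in A :&: B] = A :\: B.
  apply/setP => y; rewrite !inE; apply/imsetP/andP => [[x] | [nBy Ay]].
  - by rewrite inE => /andP[Ax Bx] ->; rewrite perA antiB Ax Bx.
  - exists (y - s); last by rewrite subrK.
    by rewrite inE -perA -[y - s \in B]negbK -antiB subrK nBy Ay.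
rewrite -[in RHS](cardsID B A) -shift_AIB card_imset; last exact: addIr.
by rewrite muln2 addnn.
Qed.

Lemma card_antiperiodic s B : antiperiodic s B -> (#|B| * 2 = #|G|)%N.
Proof.
move=> antiB; rewrite -cardsT -[B]setTI.
by apply: card_setI_antiperiodic antiB => x; rewrite !inE.
Qed.

Lemma card_setI_quarter s t X Y :
  periodic s X -> antiperiodic s Y -> antiperiodic t X ->
  (#|X :&: Y| * 4 = #|G|)%N.
Proof.
move=> perX antiY antiX.
by rewrite -(card_antiperiodic antiX) -(card_setI_antiperiodic perX antiY) -mulnA.
Qed.

Lemma delta_mult_setI A B g : delta_mult A B g = #|[set b | b + g \in A] :&: B|.
Proof.
have pair_inj : injective (fun b => (b + g, b)) by move=> x y [].
rewrite /delta_mult -(card_imset _ pair_inj).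
apply: eq_card => -[a b]; rewrite !inE /=.
apply/and3P/imsetP => [[aA bB /eqP <-] | [x]].
  by exists b; rewrite ?inE addrC subrK ?aA ?bB.
by rewrite !inE => /andP[xA xB] [-> ->]; rewrite addrAC subrr add0r xA xB.
Qed.

End TranslationCounting.

Lemma ltn_modD_half h t : (0 < h)%N ->
  ((t + h) %% (h * 2) < h)%N = ~~ (t %% (h * 2) < h)%N.
Proof.
move=> h_gt0; rewrite -modnDml.
have := ltn_pmod t (_ : 0 < h * 2)%N; move: (t %% (h * 2))%N => r.
case: (ltnP r h) => [r_lt_h | h_le_r] r_lt_2h; last first.
  have -> : (r + h = (r - h) + h * 2)%N by lia.
  by rewrite modnDr modn_small; lia.
by rewrite modn_small; lia.
Qed.

Lemma eq_mul_pow2 n k m : (k <= m)%N -> (n * 2 ^ k = 2 ^ m)%N -> n = (2 ^ (m - k))%N.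
Proof.
move=> le_km; rewrite -{1}(subnK le_km) expnD => /eqP.
by rewrite eqn_pmul2r ?expn_gt0 // => /eqP.
Qed.

Section Dyadic.
Variable N : nat.
Hypothesis N_gt0 : (0 < N)%N.
Local Notation Z := 'Z_(2 ^ N).

Lemma pow2_gt1 : (1 < 2 ^ N)%N.
Proof. by rewrite -{1}(expn0 2) ltn_exp2l. Qed.

Lemma card_Zpow2 : #|{: Z}| = (2 ^ N)%N.
Proof. by rewrite card_ord Zp_cast // pow2_gt1. Qed.

Lemma modn_val_addZ (x : Z) n d : (d %| 2 ^ N)%N ->
  ((x + n%:R)%R %% d = (x + n) %% d)%N.
Proof.
move=> d_dvd; have d_dvd_q : (d %| (Zp_trunc (2 ^ N)).+2)%N.
  by rewrite Zp_cast ?pow2_gt1.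
rewrite /= val_Zp_nat ?pow2_gt1 // (modn_dvdm _ d_dvd_q).
by rewrite -modnDmr (modn_dvdm _ d_dvd) modnDmr.
Qed.

Lemma Aset_antiperiodic k : (k < N)%N -> antiperiodic (2 ^ k)%:R (Aset N k.+1).
Proof.
move=> lt_kN x; rewrite !inE modn_val_addZ ?dvdn_exp2l // expnSr.
by apply: ltn_modD_half; rewrite expn_gt0.
Qed.

Lemma Aset_periodic k l : (k < N)%N -> (k < l)%N ->
  periodic (2 ^ l)%:R (Aset N k.+1).
Proof.
move=> lt_kN lt_kl x; rewrite !inE modn_val_addZ ?dvdn_exp2l //.
by rewrite -(subnK lt_kl) expnD addnC modnMDl.
Qed.

End Dyadic.

Theorem theorem3p5 (N : nat) (hN : (1 < N)%N) :
  PSEDF (2 ^ N) (2 ^ N.-1) (2 ^ N.-2) (fun i : 'I_N => Aset N i.+1) /\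
  exists A : 'I_N -> {set 'Z_(2 ^ N)}, PSEDF (2 ^ N) (2 ^ N.-1) (2 ^ N.-2) A.
Proof.
have N_gt0 : (0 < N)%N by apply: ltnW.
have card_ZN := card_Zpow2 N_gt0.
have psedf : PSEDF (2 ^ N) (2 ^ N.-1) (2 ^ N.-2) (fun i : 'I_N => Aset N i.+1).
  split=> // [i | i j neq_ij g].
    rewrite -subn1; apply: eq_mul_pow2; first exact: ltnW.
    exact: etrans (card_antiperiodic (Aset_antiperiodic _ (ltn_ord i))) card_ZN.
  rewrite -subn2; apply: eq_mul_pow2 => //; apply: etrans card_ZN.
  rewrite delta_mult_setI.
  have [lt_ij | lt_ji | eq_ij] := ltngtP i j; last by rewrite (val_inj eq_ij) eqxx in neq_ij.
  - apply: (@card_setI_quarter _ (2 ^ j)%:R (2 ^ i)%:R).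
    + exact/periodic_translate/Aset_periodic.
    + exact: Aset_antiperiodic.
    + exact/antiperiodic_translate/Aset_antiperiodic.
  - rewrite setIC; apply: (@card_setI_quarter _ (2 ^ i)%:R (2 ^ j)%:R).
    + exact: Aset_periodic.
    + exact/antiperiodic_translate/Aset_antiperiodic.
    + exact: Aset_antiperiodic.
by split; last exists (fun i : 'I_N => Aset N i.+1).
Qed.
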